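(* Let Q be a strong quasi-MV* algebra. Then there exist an MV*-algebra B and a flat strong quasi-MV* algebra F such that Q can be embedded into the direct product B × F. Such an embedding is an isomorphism if Q is an MV*-algebra or Q is a flat strong quasi-MV* algebra.
   Context: An MV*-algebra is an algebra ⟨B; ⊕, −, 0, 1⟩ of type ⟨2,1,0,0⟩ satisfying: x⊕y = y⊕x; (1⊕x)⊕(y⊕(1⊕z)) = ((1⊕x)⊕y)⊕(1⊕z); x⊕(−x) = 0; (x⊕1)⊕1 = 1; x⊕0 = x; −(x⊕y) = (−x)⊕(−y); −(−x) = x; x⊕y = (x⁺⊕y⁺)⊕(x⁻⊕y⁻); (−x⊕(x⊕y))⁺ = −(x⁺)⊕(x⁺⊕y⁺); x∨y = y∨x; x∨(y∨z) = (x∨y)∨z; x⊕(y∨z) = (x⊕y)∨(x⊕z); where x⁺ = 1⊕(−1⊕x), x⁻ = −1⊕(1⊕x), and x∨y = (x⁺⊕(−x⁺⊕y⁺)⁺)⊕(x⁻⊕(−x⁻⊕y⁻)⁺). A quasi-MV* algebra is an algebra ⟨A; ⊕, −, ⁺, ⁻, 0, 1⟩ of type ⟨2,1,1,1,0,0⟩ satisfying: x⊕y = y⊕x; (1⊕x)⊕(y⊕(1⊕z)) = ((1⊕x)⊕y)⊕(1⊕z); (x⊕1)⊕1 = 1; (x⊕y)⊕0 = x⊕y; x⁺⊕0 = (x⊕0)⁺ = 1⊕(−1⊕x) and x⁻⊕0 = (x⊕0)⁻ = −1⊕(1⊕x); x⊕y = (x⁺⊕y⁺)⊕(x⁻⊕y⁻);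 0 = −0; x⊕(−x) = 0; −(x⊕y) = (−x)⊕(−y); −(−x) = x; (−x⊕(x⊕y))⁺ = −x⁺⊕(x⁺⊕y⁺); x∨y = y∨x; x∨(y∨z) = (x∨y)∨z; x⊕(y∨z) = (x⊕y)∨(x⊕z); with x∨y = (x⁺⊕(−x⁺⊕y⁺)⁺)⊕(x⁻⊕(−x⁻⊕y⁻)⁺). A strong quasi-MV* algebra is a quasi-MV* algebra satisfying x⁺ = x⁺⊕0 and x⁻ = x⁻⊕0 for all x. It is flat if it satisfies 0 = 1. Direct products carry coordinatewise operations; an embedding is an injective map preserving 0, 1, ⊕ and − (hence also ⁺ and ⁻). *)

Set Implicit Arguments.

Section MVstar.
Variables (A : Type) (add : A -> A -> A) (neg : A -> A) (zero one : A).

Definition mv_pos (x : A) : A := add one (add (neg one) x).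
Definition mv_negp (x : A) : A := add (neg one) (add one x).
Definition mv_join (x y : A) : A :=
  add (add (mv_pos x) (mv_pos (add (neg (mv_pos x)) (mv_pos y))))
      (add (mv_negp x) (mv_pos (add (neg (mv_negp x)) (mv_negp y)))).

Record is_MVstar : Prop := {
  mv_comm : forall x y, add x y = add y x;
  mv_assoc : forall x y z,
    add (add one x) (add y (add one z)) = add (add (add one x) y) (add one z);
  mv_one_abs : forall x, add (add x one) one = one;
  mv_inv : forall x, add x (neg x) = zero;
  mv_zero_r : forall x, add x zero = x;
  mv_neg_add : forall x y, neg (add x y) = add (neg x) (neg y);
  mv_neg_inv : forall x, neg (neg x) = x;
  mv_decomp : forall x y,
    add x y = add (add (mv_pos x) (mv_pos y)) (add (mv_negp x) (mv_negp y));
  mv_pos_eq : forall x y,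
    mv_pos (add (neg x) (add x y)) = add (neg (mv_pos x)) (add (mv_pos x) (mv_pos y));
  mv_join_comm : forall x y, mv_join x y = mv_join y x;
  mv_join_assoc : forall x y z, mv_join x (mv_join y z) = mv_join (mv_join x y) z;
  mv_join_distr : forall x y z,
    add x (mv_join y z) = mv_join (add x y) (add x z)
}.
End MVstar.

Section QMVstar.
Variables (A : Type) (add : A -> A -> A) (neg pos negp : A -> A) (zero one : A).

Definition q_join (x y : A) : A :=
  add (add (pos x) (pos (add (neg (pos x)) (pos y))))
      (add (negp x) (pos (add (neg (negp x)) (negp y)))).

Record is_qMVstar : Prop := {
  q_comm : forall x y, add x y = add y x;
  q_assoc : forall x y z,
    add (add one x) (add y (add one z)) = add (add (add one x) y) (add one z);
  q_one_abs : forall x, add (add x one) one = one;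
  q_zero_r : forall x y, add (add x y) zero = add x y;
  q_pos0 : forall x, add (pos x) zero = pos (add x zero);
  q_pos1 : forall x, pos (add x zero) = add one (add (neg one) x);
  q_negp0 : forall x, add (negp x) zero = negp (add x zero);
  q_negp1 : forall x, negp (add x zero) = add (neg one) (add one x);
  q_decomp : forall x y, add x y = add (add (pos x) (pos y)) (add (negp x) (negp y));
  q_neg_zero : zero = neg zero;
  q_inv : forall x, add x (neg x) = zero;
  q_neg_add : forall x y, neg (add x y) = add (neg x) (neg y);
  q_neg_inv : forall x, neg (neg x) = x;
  q_pos_eq : forall x y,
    pos (add (neg x) (add x y)) = add (neg (pos x)) (add (pos x) (pos y));
  q_join_comm : forall x y, q_join x y = q_join y x;
  q_join_assoc : forall x y z, q_join x (q_join y z) = q_join (q_join x y) z;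
  q_join_distr : forall x y z,
    add x (q_join y z) = q_join (add x y) (add x z)
}.

Definition is_strong : Prop :=
  (forall x, pos x = add (pos x) zero) /\ (forall x, negp x = add (negp x) zero).

Definition is_flat : Prop := zero = one.
End QMVstar.

Definition is_embedding_prod (A B F : Type)
  (addA : A -> A -> A) (negA : A -> A) (zA oA : A)
  (addB : B -> B -> B) (negB : B -> B) (zB oB : B)
  (addF : F -> F -> F) (negF : F -> F) (zF oF : F)
  (f : A -> B * F) : Prop :=
  (forall x y, f x = f y -> x = y) /\
  f zA = (zB, zF) /\
  f oA = (oB, oF) /\
  (forall x y, f (addA x y) = (addB (fst (f x)) (fst (f y)), addF (snd (f x)) (snd (f y)))) /\
  (forall x, f (negA x) = (negB (fst (f x)), negF (snd (f x)))).

(* The regular elements, those with x ⊕ 0 = x, form an MV*-algebra onto which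
   x ↦ x ⊕ 0 is a homomorphism: every sum is regular, and strongness makes ⁺, ⁻
   and the join of Q coincide with their MV* definitions.  What x ⊕ 0 forgets is
   kept by remembering x itself whenever x is not regular.  The irregular elements
   together with 0 are closed under −, and an involutive set with a fixed point is
   a flat strong quasi-MV* algebra once ⊕, ⁺, ⁻ are constantly that point.  Hence
   x ↦ (x ⊕ 0, x or 0) is an embedding.  In an MV*-algebra every element is
   regular, in a flat algebra only 0 is, so one factor is trivial and the
   embedding is onto. *)

From Stdlib Require Import ClassicalEpsilon ProofIrrelevance.

Set Implicit Arguments.

Lemma sig_eq (T : Type) (P : T -> Prop) (u v : {x : T | P x}) :
  proj1_sig u = proj1_sig v -> u = v.
Proof. apply eq_sig_hprop; intros; apply proof_irrelevance. Qed.

Section FlatOfInvolution.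
Variables (T : Type) (inv : T -> T) (c : T).
Hypothesis inv_involutive : forall x, inv (inv x) = x.
Hypothesis inv_fixed : inv c = c.

Lemma involution_is_qMVstar :
  is_qMVstar (fun _ _ => c) inv (fun _ => c) (fun _ => c) c c.
Proof. constructor; auto. Qed.

Lemma involution_is_strong : is_strong (fun _ _ => c) (fun _ => c) (fun _ => c) c.
Proof. split; reflexivity. Qed.

End FlatOfInvolution.

Section Decomposition.
Variables (A : Type) (add : A -> A -> A) (neg pos negp : A -> A) (zero one : A).
Hypothesis HQ : is_qMVstar add neg pos negp zero one.

Definition regular (x : A) : Prop := add x zero = x.

Lemma regular_add x y : regular (add x y).
Proof. apply (q_zero_r HQ). Qed.

Lemma regular_zero : regular zero.
Proof. rewrite <- (q_inv HQ one). apply regular_add. Qed.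

Lemma regular_one : regular one.
Proof. unfold regular; rewrite <- (q_one_abs HQ one). apply regular_add. Qed.

Lemma neg_zero : neg zero = zero.
Proof. symmetry; apply (q_neg_zero HQ). Qed.

Lemma add_zero_neg x : add (neg x) zero = neg (add x zero).
Proof. rewrite (q_neg_add HQ), neg_zero; reflexivity. Qed.

Lemma regular_neg x : regular (neg x) <-> regular x.
Proof.
  unfold regular; rewrite add_zero_neg; split; intros E.
  - rewrite <- (q_neg_inv HQ (add x zero)), E; apply (q_neg_inv HQ).
  - rewrite E; reflexivity.
Qed.

Lemma flat_add_zero : is_flat zero one -> forall x, add x zero = zero.
Proof.
  intros Hfl x. pose proof (q_one_abs HQ x) as E.
  unfold is_flat in Hfl; rewrite <- Hfl, (q_zero_r HQ) in E; exact E.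
Qed.

Definition Reg : Type := {x : A | regular x}.

Definition reg_add (a b : Reg) : Reg :=
  exist _ (add (proj1_sig a) (proj1_sig b)) (regular_add _ _).
Definition reg_neg (a : Reg) : Reg :=
  exist _ (neg (proj1_sig a)) (proj2 (regular_neg _) (proj2_sig a)).
Definition reg_zero : Reg := exist _ zero regular_zero.
Definition reg_one : Reg := exist _ one regular_one.
Definition reg_part (x : A) : Reg := exist _ (add x zero) (regular_add x zero).

Definition irregular_or_zero (x : A) : Prop := x = zero \/ ~ regular x.

Lemma irregular_or_zero_neg x : irregular_or_zero x -> irregular_or_zero (neg x).
Proof.
  intros [-> | h]; [left; apply neg_zero | right].
  rewrite regular_neg; exact h.
Qed.

Definition Irr : Type := {x : A | irregular_or_zero x}.

Definition irr_zero : Irr := exist _ zero (or_introl eq_refl).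
Definition irr_neg (a : Irr) : Irr :=
  exist _ (neg (proj1_sig a)) (irregular_or_zero_neg (proj2_sig a)).

Lemma irr_neg_involutive a : irr_neg (irr_neg a) = a.
Proof. apply sig_eq, (q_neg_inv HQ). Qed.

Lemma irr_neg_zero : irr_neg irr_zero = irr_zero.
Proof. apply sig_eq, neg_zero. Qed.

Definition irr_part (x : A) : Irr :=
  match excluded_middle_informative (regular x) with
  | left _ => irr_zero
  | right h => exist _ x (or_intror h)
  end.

Lemma irr_part_regular x : regular x -> irr_part x = irr_zero.
Proof.
  intros h; unfold irr_part.
  destruct (excluded_middle_informative _); [reflexivity | contradiction].
Qed.

Lemma irr_part_irregular x : ~ regular x -> proj1_sig (irr_part x) = x.
Proof.
  intros h; unfold irr_part.
  destruct (excluded_middle_informative _); [contradiction | reflexivity].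
Qed.

Lemma irr_part_neg x : irr_part (neg x) = irr_neg (irr_part x).
Proof.
  destruct (excluded_middle_informative (regular x)) as [h | h].
  - rewrite (irr_part_regular h), irr_part_regular by (apply regular_neg, h).
    symmetry; apply irr_neg_zero.
  - apply sig_eq; simpl.
    rewrite (irr_part_irregular h), irr_part_irregular by (rewrite regular_neg; exact h).
    reflexivity.
Qed.

Definition decompose (x : A) : Reg * Irr := (reg_part x, irr_part x).

Lemma decompose_injective x y : decompose x = decompose y -> x = y.
Proof.
  intros E.
  assert (Ereg : add x zero = add y zero)
    by exact (f_equal (fun p => proj1_sig (fst p)) E).
  assert (Eirr : proj1_sig (irr_part x) = proj1_sig (irr_part y))
    by exact (f_equal (fun p => proj1_sig (snd p)) E).
  destruct (excluded_middle_informative (regular x)) as [hx | hx],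
           (excluded_middle_informative (regular y)) as [hy | hy].
  - unfold regular in *; congruence.
  - rewrite (irr_part_regular hx), (irr_part_irregular hy) in Eirr.
    simpl in Eirr; subst y; contradiction (hy regular_zero).
  - rewrite (irr_part_irregular hx), (irr_part_regular hy) in Eirr.
    simpl in Eirr; subst x; contradiction (hx regular_zero).
  - rewrite (irr_part_irregular hx), (irr_part_irregular hy) in Eirr; exact Eirr.
Qed.

Lemma decompose_surjective_MVstar :
  is_MVstar add neg zero one -> forall p, exists x, decompose x = p.
Proof.
  intros Hmv [[b hb] [c [-> | hc]]].
  - exists b; unfold decompose; f_equal.
    + apply sig_eq; exact hb.
    + rewrite irr_part_regular by exact hb; apply sig_eq; reflexivity.
  - contradiction (hc (mv_zero_r Hmv c)).
Qed.

Lemma decompose_surjective_flat :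
  is_flat zero one -> forall p, exists x, decompose x = p.
Proof.
  intros Hfl [[b hb] c].
  assert (b = zero) as -> by (rewrite <- hb; apply flat_add_zero, Hfl).
  destruct c as [c [-> | hc]].
  - exists zero; unfold decompose; f_equal.
    + apply sig_eq, regular_zero.
    + rewrite irr_part_regular by exact regular_zero; apply sig_eq; reflexivity.
  - exists c; unfold decompose; f_equal.
    + apply sig_eq, flat_add_zero, Hfl.
    + apply sig_eq, irr_part_irregular, hc.
Qed.

Section Strong.
Hypothesis HS : is_strong add pos negp zero.

Lemma pos_mv_pos x : pos x = mv_pos add neg one x.
Proof. destruct HS as [S _]. rewrite S, (q_pos0 HQ), (q_pos1 HQ); reflexivity. Qed.

Lemma negp_mv_negp x : negp x = mv_negp add neg one x.
Proof. destruct HS as [_ S]. rewrite S, (q_negp0 HQ), (q_negp1 HQ); reflexivity. Qed.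

Lemma q_join_mv_join x y : q_join add neg pos negp x y = mv_join add neg one x y.
Proof. unfold q_join, mv_join. rewrite !pos_mv_pos, !negp_mv_negp; reflexivity. Qed.

(* Both sides have the same decomposition into ⁺ and ⁻ parts, as (x ⊕ 0)⁺ = x⁺ ⊕ 0 = x⁺. *)
Lemma add_zero_add x y : add (add x zero) (add y zero) = add x y.
Proof.
  destruct HS as [S1 S2].
  rewrite (q_decomp HQ (add x zero)), (q_decomp HQ x y).
  rewrite <- !(q_pos0 HQ), <- !(q_negp0 HQ), <- !S1, <- !S2; reflexivity.
Qed.

Lemma Reg_is_MVstar : is_MVstar reg_add reg_neg reg_zero reg_one.
Proof.
  constructor; intros; apply sig_eq; simpl.
  - apply (q_comm HQ).
  - apply (q_assoc HQ).
  - apply (q_one_abs HQ).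
  - apply (q_inv HQ).
  - apply (proj2_sig x).
  - apply (q_neg_add HQ).
  - apply (q_neg_inv HQ).
  - rewrite (q_decomp HQ), !pos_mv_pos, !negp_mv_negp; reflexivity.
  - pose proof (q_pos_eq HQ (proj1_sig x) (proj1_sig y)) as E.
    rewrite !pos_mv_pos in E; exact E.
  - pose proof (q_join_comm HQ (proj1_sig x) (proj1_sig y)) as E.
    rewrite !q_join_mv_join in E; exact E.
  - pose proof (q_join_assoc HQ (proj1_sig x) (proj1_sig y) (proj1_sig z)) as E.
    rewrite !q_join_mv_join in E; exact E.
  - pose proof (q_join_distr HQ (proj1_sig x) (proj1_sig y) (proj1_sig z)) as E.
    rewrite !q_join_mv_join in E; exact E.
Qed.

Lemma decompose_embedding :
  is_embedding_prod add neg zero one reg_add reg_neg reg_zero reg_one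
    (fun _ _ => irr_zero) irr_neg irr_zero irr_zero decompose.
Proof.
  unfold decompose.
  split; [exact decompose_injective |].
  split; [| split; [| split]].
  - f_equal; [apply sig_eq, regular_zero | apply irr_part_regular, regular_zero].
  - f_equal; [apply sig_eq, regular_one | apply irr_part_regular, regular_one].
  - intros x y; f_equal; [| apply irr_part_regular, regular_add].
    apply sig_eq; simpl.
    rewrite add_zero_add; apply regular_add.
  - intros x; f_equal; [apply sig_eq, add_zero_neg | apply irr_part_neg].
Qed.

End Strong.

End Decomposition.

Theorem proposition3p1 (A : Type) (add : A -> A -> A) (neg pos negp : A -> A)
    (zero one : A) :
  is_qMVstar add neg pos negp zero one ->
  is_strong add pos negp zero ->
  exists (B : Type) (addB : B -> B -> B) (negB : B -> B) (zB oB : B),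
    is_MVstar addB negB zB oB /\
  exists (F : Type) (addF : F -> F -> F) (negF posF negpF : F -> F) (zF oF : F),
    is_qMVstar addF negF posF negpF zF oF /\
    is_strong addF posF negpF zF /\
    is_flat zF oF /\
  exists f : A -> B * F,
    is_embedding_prod add neg zero one addB negB zB oB addF negF zF oF f /\
    ((is_MVstar add neg zero one \/ is_flat zero one) ->
       forall p : B * F, exists x : A, f x = p).
Proof.
  intros HQ HS.
  exists (Reg add zero), (reg_add HQ), (reg_neg HQ), (reg_zero HQ), (reg_one HQ).
  split; [exact (Reg_is_MVstar HQ HS) |].
  set (c := irr_zero add zero).
  exists (Irr add zero), (fun _ _ => c), (irr_neg HQ), (fun _ => c), (fun _ => c), c, c.
  split; [apply involution_is_qMVstar; [apply irr_neg_involutive | apply irr_neg_zero] |].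
  split; [apply involution_is_strong |].
  split; [reflexivity |].
  exists (decompose HQ).
  split; [exact (decompose_embedding HQ HS) |].
  intros [Hmv | Hfl].
  - exact (decompose_surjective_MVstar HQ Hmv).
  - exact (decompose_surjective_flat HQ Hfl).
Qed.
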